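(* Let $\mathcal{T}$ be an $l$-eligible microdata table and run the algorithm described in the context (with arbitrary tie-breaking). Suppose the algorithm does not terminate at the end of Phase One. Then $h(\ddot{R}) = h(\dot{R})$, where $\dot{R}$ is $R$ at the end of Phase One and $\ddot{R}$ is $R$ at the end of Phase Two.
   Context: A microdata table $\mathcal{T}$ is a multiset of $n$ tuples with values on $d$ quasi-identifier (QI) attributes and one sensitive attribute (SA). For a multiset $Q$ and SA value $v$, $h(Q,v)$ is the number of tuples in $Q$ with SA value $v$, $h(Q)=\max_v h(Q,v)$, pillars of $Q$ are the $v$ with $h(Q,v)=h(Q)$; $Q$ is $l$-eligible if $|Q|\ge l\cdot h(Q)$. Let $Q_1,\dots,Q_s$ be the maximal classes of tuples of $\mathcal{T}$ with identical values on all QI attributes; the algorithm only moves tuples from these groups into a set $R$ (initially empty). Phase One: for each $i$, while $Q_i$ is not $l$-eligible, move a tuple of a pillar of $Q_i$ to $R$; call the result $\dot{Q}_i,\dot{R}$; if $R$ is $l$-eligible, terminate. Phase Two terminology (w.r.t. current state): a group $Q$ is thin if $|Q|=l\cdot h(Q)$ and fat if $|Q|\ge l\cdot h(Q)+1$; $Q$ is conflicting if some pillar of $Q$ is a pillar of $R$ (such pillars are its conflicting pillars); $Q$ is dead if thin and conflicting, alive otherwise; an SA value $v$ is alive if some alive group $Q$ has $h(Q,v)>0$. Phase Two iterates: if no SA value is alive, Phase Two ends (go to Phase Three). Otherwise pick an alive SA value $v$ minimizing $h(R,v)$ and an alive group $Q$ with $h(Q,v)>0$ (ties arbitrary); if $Q$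 is fat move one tuple with SA value $v$ from $Q$ to $R$; if $Q$ is thin move one tuple of each pillar of $Q$ to $R$. If $R$ is now $l$-eligible, the algorithm terminates (ending Phase Two). $\ddot{Q}_i,\ddot{R}$ denote the state when Phase Two ends. *)

From mathcomp Require Import all_boot.
Set Implicit Arguments. Unset Strict Implicit. Unset Printing Implicit Defensive.

Section Anon.
Variables (X S : eqType).
(* A tuple is a pair (QI-value, SA-value); a multiset of tuples is a seq. *)
Definition tup := (X * S)%type.

Definition hv (Q : seq tup) (v : S) : nat := count (fun t => t.2 == v) Q.
(* h(Q) = max_v h(Q,v) (values not occurring contribute 0) *)
Definition h (Q : seq tup) : nat := \max_(t <- Q) hv Q t.2.
Definition pillar (Q : seq tup) (v : S) : Prop := hv Q v = h Q.
Definition eligible (l : nat) (Q : seq tup) : bool := l * h Q <= size Q.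
Definition thin (l : nat) (Q : seq tup) : bool := size Q == l * h Q.
Definition fat (l : nat) (Q : seq tup) : bool := l * h Q + 1 <= size Q.
Definition conflicting (Q R : seq tup) : Prop := exists v, pillar Q v /\ pillar R v.
Definition dead (l : nat) (Q R : seq tup) : Prop := thin l Q /\ conflicting Q R.
Definition alive_group (l : nat) (Q R : seq tup) : Prop := ~ dead l Q R.
Definition alive_value (l : nat) (G : seq (seq tup)) (R : seq tup) (v : S) : Prop :=
  exists2 i, i < size G & alive_group l (nth [::] G i) R /\ 0 < hv (nth [::] G i) v.

Definition qi_groups (T : seq tup) : seq (seq tup) :=
  [seq [seq t <- T | t.1 == q] | q <- undup (map fst T)].

(* Phase One on a single group: reduce Q Q' M  means that, starting from Q,
   repeatedly moving a tuple of a pillar while Q is not l-eligible, can end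
   with group Q' having moved the tuples M. *)
Inductive reduce (l : nat) : seq tup -> seq tup -> seq tup -> Prop :=
| reduce_stop Q : eligible l Q -> reduce l Q Q [::]
| reduce_move Q t Q' M : ~~ eligible l Q -> t \in Q -> pillar Q t.2 ->
    reduce l (rem t Q) Q' M -> reduce l Q Q' (t :: M).

Definition phase1 (l : nat) (G G1 : seq (seq tup)) (R1 : seq tup) : Prop :=
  size G1 = size G /\
  exists Ms : seq (seq tup), size Ms = size G /\
    (forall i, i < size G -> reduce l (nth [::] G i) (nth [::] G1 i) (nth [::] Ms i)) /\
    R1 = flatten Ms.

Definition step2 (l : nat) (G : seq (seq tup)) (R : seq tup)
    (G' : seq (seq tup)) (R' : seq tup) : Prop :=
  exists v : S,
    alive_value l G R v /\
    (forall w, alive_value l G R w -> hv R v <= hv R w) /\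
    exists2 i, i < size G &
      let Q := nth [::] G i in
      alive_group l Q R /\ 0 < hv Q v /\
      ((fat l Q /\ exists2 t, t \in Q & t.2 = v /\
           G' = set_nth [::] G i (rem t Q) /\ R' = t :: R)
       \/
       (thin l Q /\ exists M Q' : seq tup,
           perm_eq Q (Q' ++ M) /\
           (forall w, (pillar Q w -> hv M w = 1) /\ (~ pillar Q w -> hv M w = 0)) /\
           G' = set_nth [::] G i Q' /\ R' = M ++ R)).

Inductive phase2 (l : nat) : seq (seq tup) -> seq tup -> seq (seq tup) -> seq tup -> Prop :=
| phase2_end G R : (forall v, ~ alive_value l G R v) -> phase2 l G R G R
| phase2_term G R G' R' : step2 l G R G' R' -> eligible l R' -> phase2 l G R G' R'
| phase2_cont G R G' R' G2 R2 : step2 l G R G' R' -> ~~ eligible l R' ->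
    phase2 l G' R' G2 R2 -> phase2 l G R G2 R2.
End Anon.

From mathcomp Require Import all_boot.
Set Implicit Arguments. Unset Strict Implicit. Unset Printing Implicit Defensive.

(* Every Phase Two step adds to R only tuples whose SA value is below h(R)
   in R, and at most one tuple per value, so h(R) never changes.  For a thin
   alive group this holds because its pillars are not pillars of R.  For a fat
   step with value v: if h(R,v) = h(R), minimality of v forces every SA value
   of the (alive) group Q to reach h(R) in R; a fat Q has more than l distinct
   values, so |R| > l h(R) and R would already have been l-eligible.
   Phase One only matters through the fact that R is not l-eligible when
   Phase Two starts. *)

Lemma sum_count_mem_uniq (T : eqType) (P s : seq T) : uniq P ->
  \sum_(w <- P) count_mem w s = count (mem P) s.
Proof.
move=> uP; elim: s => [|x s IH] /=; first by rewrite big1.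
rewrite big_split /= IH; congr (_ + _).
rewrite -(count_uniq_mem x uP) -sum1_count [RHS]big_mkcond /=.
by apply: eq_bigr => w _; rewrite eq_sym; case: (w == x).
Qed.

Section Height.
Variables (X S : eqType).
Implicit Types (Q R M : seq (X * S)) (P : seq S).

Lemma hv_le_h Q w : hv Q w <= h Q.
Proof.
case: (posnP (hv Q w)) => [->//|]; rewrite /hv -has_count => /hasP [t tQ /eqP <-].
exact: leq_bigmax_seq tQ _.
Qed.

Lemma h_le Q k : (forall w, hv Q w <= k) -> h Q <= k.
Proof. by move=> hvQ; apply/bigmax_leqP_seq => t _ _; apply: hvQ. Qed.

Lemma hv_cat M R w : hv (M ++ R) w = hv M w + hv R w.
Proof. exact: count_cat. Qed.

Lemma h_cat_eq M R : (forall w, hv M w + hv R w <= h R) -> h (M ++ R) = h R.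
Proof.
move=> hvMR; apply/eqP; rewrite eqn_leq; apply/andP; split.
  by apply: h_le => w; rewrite hv_cat.
by apply: h_le => w; rewrite (leq_trans _ (hv_le_h _ w)) // hv_cat leq_addl.
Qed.

Lemma sum_hv_uniq Q P : uniq P ->
  \sum_(w <- P) hv Q w = count (mem P) (map snd Q).
Proof.
move=> uP; rewrite -sum_count_mem_uniq //.
by apply: eq_bigr => w _; rewrite /hv count_map.
Qed.

Lemma size_le_values_h Q : size Q <= size (undup (map snd Q)) * h Q.
Proof.
set P := undup (map snd Q).
have allP : count (mem P) (map snd Q) = size Q.
  rewrite -(size_map snd); apply/eqP; rewrite -all_count.
  by apply/allP => w wQ; rewrite /= mem_undup.
rewrite -allP -sum_hv_uniq ?undup_uniq // mulnC -iter_addn_0 -count_predT.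
by rewrite -big_const_seq leq_sum // => w _; apply: hv_le_h.
Qed.

Lemma eligible_of_full_values l R P : uniq P -> l <= size P ->
  {in P, forall w, h R <= hv R w} -> eligible l R.
Proof.
move=> uP lP fullP; rewrite /eligible (leq_trans (leq_mul lP (leqnn _))) //.
rewrite -count_predT mulnC -iter_addn_0 -big_const_seq.
rewrite (@leq_trans (\sum_(w <- P) hv R w)) //.
  by rewrite big_seq_cond [leqRHS]big_seq_cond; apply: leq_sum => w /andP[/fullP].
by rewrite sum_hv_uniq // -(size_map snd) count_size.
Qed.

Lemma fat_values_gt l Q : fat l Q -> l < size (undup (map snd Q)).
Proof.
rewrite /fat addn1 => fatQ; rewrite ltnNge; apply/negP => valsQ.
have := leq_trans fatQ (leq_trans (size_le_values_h Q) (leq_mul valsQ (leqnn _))).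
by rewrite ltnn.
Qed.

End Height.

Section PhaseTwo.
Variables (X S : eqType) (l : nat).
Implicit Types (Q R : seq (X * S)) (G : seq (seq (X * S))).

Lemma eligible_of_alive_fat G R i : i < size G ->
  fat l (nth [::] G i) -> alive_group l (nth [::] G i) R ->
  (forall w, alive_value l G R w -> h R <= hv R w) -> eligible l R.
Proof.
move=> iG fatQ aliveQ full; apply: (eligible_of_full_values (P := undup (map snd (nth [::] G i)))).
- exact: undup_uniq.
- exact: ltnW (fat_values_gt fatQ).
move=> w; rewrite mem_undup => wQ; apply: full; exists i => //; split => //.
by rewrite /hv -has_count; case/mapP: wQ => t tQ ->; apply/hasP; exists t.
Qed.

Lemma thin_alive_pillar_lt Q R w : thin l Q -> alive_group l Q R ->
  pillar Q w -> hv R w < h R.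
Proof.
move=> thinQ aliveQ pQ; rewrite ltn_neqAle hv_le_h andbT.
by apply/eqP => pR; apply: aliveQ; split => //; exists w.
Qed.

Lemma step2_h G R G' R' : step2 l G R G' R' -> ~~ eligible l R -> h R' = h R.
Proof.
move=> [v [_ [vmin [i iG [aliveQ [_ [[fatQ [t _ [tv [_ ->]]]] |
  [thinQ [M [Q' [_ [hvM [_ ->]]]]]]]]]]]]] notel.
- have vlt : hv R v < h R.
    rewrite ltn_neqAle hv_le_h andbT; apply: contra notel => /eqP hRv.
    by apply: eligible_of_alive_fat iG fatQ aliveQ _ => w /vmin; rewrite hRv.
  apply: (@h_cat_eq _ _ [:: t]) => w; rewrite /hv /= -/(hv R w) addn0 tv.
  by case: eqP => [<-|_]; rewrite ?add1n ?hv_le_h.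
- apply: h_cat_eq => w; have [hvM1 hvM0] := hvM w.
  have [pQ|npQ] := eqVneq (hv (nth [::] G i) w) (h (nth [::] G i)).
    by rewrite hvM1 // add1n (thin_alive_pillar_lt thinQ aliveQ).
  by rewrite hvM0 ?add0n ?hv_le_h // => /eqP; rewrite (negPf npQ).
Qed.

Lemma phase2_h G R G2 R2 : phase2 l G R G2 R2 -> ~~ eligible l R -> h R2 = h R.
Proof.
elim=> [//|{}G {}R G' R' st _ notel|{}G {}R G' R' G3 R3 st notel' _ IH notel].
  exact: step2_h st notel.
by rewrite IH // (step2_h st notel).
Qed.

End PhaseTwo.

Theorem lemma5 (X S : eqType) (l : nat) (T : seq (X * S))
    (G1 : seq (seq (X * S))) (R1 : seq (X * S))
    (G2 : seq (seq (X * S))) (R2 : seq (X * S)) :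
  eligible l T ->
  phase1 l (qi_groups T) G1 R1 ->
  ~~ eligible l R1 ->
  phase2 l G1 R1 G2 R2 ->
  h R2 = h R1.
Proof. by move=> _ _ notel run2; apply: phase2_h run2 notel. Qed.
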